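(* Let $1\le p<\infty$, $q=p(p-1)^{-1}$, $\beta\in\mathbb{R}$, let $r\ge2$ be a natural number, and let $\omega$ be a function of the modulus of continuity type. Suppose there is a constant $C$ such that for all integers $n\ge0$, $$\left\{\int_{0}^{\frac{\pi}{r(n+1)}}\left(\frac{\omega(t)}{t\sin^{\beta}\frac{rt}{2}}\right)^{q}dt\right\}^{1/q}\le C(n+1)^{\beta+1/p}\,\omega\!\left(\frac{\pi}{n+1}\right).$$ Then for every $m\in\{0,1,\dots,[r/2]-1\}$ there is a constant $C'$ such that for all $n\ge0$, $$\left\{\int_{\frac{2(m+1)\pi}{r}-\frac{\pi}{r(n+1)}}^{\frac{2(m+1)\pi}{r}}\left(\frac{\omega(t)}{t\left|\sin\frac{rt}{2}\right|^{\beta}}\right)^{q}dt\right\}^{1/q}\le C'(n+1)^{\beta+1/p}\,\omega\!\left(\frac{\pi}{n+1}\right).$$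
   Context: A function of the modulus of continuity type is a nondecreasing continuous function $\omega$ on $[0,2\pi]$ with $\omega(0)=0$ and $\omega(\delta_1+\delta_2)\le\omega(\delta_1)+\omega(\delta_2)$ whenever $0\le\delta_1\le\delta_2\le\delta_1+\delta_2\le2\pi$. $[y]$ is the integer part of $y$. When $p=1$ (so $q=\infty$), $\{\int g^q\}^{1/q}$ is read as the essential supremum of $g$. *)

From HB Require Import structures.
From mathcomp Require Import all_boot all_order all_algebra.
From mathcomp Require Import all_classical all_reals all_analysis.
Set Implicit Arguments. Unset Strict Implicit. Unset Printing Implicit Defensive.
Import Order.TTheory GRing.Theory Num.Theory numFieldNormedType.Exports.
Local Open Scope classical_set_scope.
Local Open Scope ring_scope.

Definition modulus_type {R : realType} (w : R -> R) : Prop :=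
  [/\ {in `[0, 2 * pi]%R &, {homo w : x y / x <= y}},
      {within `[0, 2 * pi]%classic, continuous w},
      w 0 = 0 &
      forall d1 d2 : R, 0 <= d1 -> d1 <= d2 -> d1 + d2 <= 2 * pi ->
        w (d1 + d2) <= w d1 + w d2].

Definition conj_exp {R : realType} (p : R) : \bar R :=
  if p == 1 then +oo%E else (p / (p - 1))%:E.

Definition itv_norm {R : realType} (q : \bar R) (a b : R) (g : R -> R) : \bar R :=
  Lnorm (mrestr (@lebesgue_measure R) (measurable_itv `[a, b])) q (EFin \o g).

(* Write c = 2(m+1)pi/r and d = pi/(r(n+1)).  For c - d <= t < c put s = c - t,
   so 0 < s <= d.  Since r c / 2 = (m+1) pi, |sin (r t / 2)| = sin (r s / 2), and
   t >= pi / r >= d >= s, so the quasi-monotonicity w(t)/t <= 2 w(s)/s of a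
   modulus of continuity bounds the integrand at t by twice the integrand of the
   hypothesis at s.  The reflection t |-> c - t preserves Lebesgue measure and
   maps [c - d, c] onto [0, d], hence the L^q norm of the conclusion is at most
   twice the one of the hypothesis and C' = 2 C works.  The pointwise bound fails
   only at the endpoint t = c, a null set. *)

From HB Require Import structures.
From mathcomp Require Import all_boot all_order all_algebra.
From mathcomp Require Import all_classical all_reals all_analysis.
From mathcomp Require Import ess_sup_inf measurable_realfun ring lra.
Set Implicit Arguments. Unset Strict Implicit. Unset Printing Implicit Defensive.
Import Order.TTheory GRing.Theory Num.Theory numFieldNormedType.Exports.
Local Open Scope ring_scope.
Local Open Scope classical_set_scope.

Section Lnorm_comparison.
Context d (T : measurableType d) (R : realType) (mu : {measure set T -> \bar R}).
Local Open Scope ereal_scope.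
Import HBNNSimple.

Lemma ge0_le_integralT (F G : T -> \bar R) :
  (forall x, 0 <= F x) -> (forall x, F x <= G x) ->
  \int[mu]_x F x <= \int[mu]_x G x.
Proof.
move=> F0 FG; have G0 x : 0 <= G x by exact: le_trans (F0 x) (FG x).
rewrite !ge0_integralTE//; apply: ereal_sup_le => _ [h /= hF <-].
by exists h => //= x; exact: le_trans (hF x) (FG x).
Qed.

Lemma ae_ge0_le_integralT (F G : T -> \bar R) :
  (forall x, 0 <= F x) -> measurable_fun setT G -> (forall x, 0 <= G x) ->
  {ae mu, forall x, F x <= G x} ->
  \int[mu]_x F x <= \int[mu]_x G x.
Proof.
move=> F0 mG G0 FG; rewrite [leLHS]ge0_integralTE//.
apply: ge_ereal_sup => _ [h /= hF <-].
have := integral_nnsfun mu measurableT h; rewrite patch_setT => <-.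
apply: ae_ge0_le_integral => //.
- by move=> x _; rewrite lee_fin.
- exact/measurable_EFinP/measurable_funP.
- by apply: filterS FG => x hx _; exact: le_trans (hF x) hx.
Qed.

Lemma Lnorm_le (p : \bar R) (f g : T -> \bar R) : 0 <= p ->
  (forall x, `|f x| <= `|g x|) -> 'N[mu]_p[f] <= 'N[mu]_p[g].
Proof.
rewrite unlock; case: p => [r r0 fg| _ fg|//].
- rewrite lee_fin in r0.
  apply: gt0_ler_poweR; rewrite ?in_itv/= ?integral_ge0 ?leey ?invr_ge0//.
  + by move=> x _; exact: poweR_ge0.
  + by move=> x _; exact: poweR_ge0.
  apply: ge0_le_integralT => x; first exact: poweR_ge0.
  by apply: gt0_ler_poweR; rewrite ?in_itv/= ?abse_ge0 ?leey.
- by case: ifP => // _; apply: le_ess_sup; apply: nearW.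
Qed.

Lemma Lnorm_le_scale_ae (p : \bar R) (K : R) (f g : T -> R) :
  0 < p -> (0 <= K)%R -> measurable_fun setT g ->
  {ae mu, forall x, `|f x| <= K * `|g x|}%R ->
  'N[mu]_p[EFin \o f] <= K%:E * 'N[mu]_p[EFin \o g].
Proof.
rewrite unlock; case: p => [r r0 K0 mg fg| _ K0 mg fg|//]; last first.
  case: ifPn => [mu0|_]; last by rewrite mule0.
  rewrite -ess_supZl//; apply: le_ess_sup; apply: filterS fg => x /= fg.
  by rewrite -EFinM lee_fin.
rewrite lte_fin in r0.
have intK : \int[mu]_x ((K * `|g x|) `^ r)%:E =
    (K `^ r)%:E * \int[mu]_x (`|g x| `^ r)%:E.
  rewrite -ge0_integralZl_EFin ?powR_ge0//; last first.
    exact/measurable_EFinP/(measurableT_comp (measurable_powR _))/measurableT_comp.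
  by apply: eq_integral => x _; rewrite -EFinM powRM.
have intle : \int[mu]_x (`|f x| `^ r)%:E <= \int[mu]_x ((K * `|g x|) `^ r)%:E.
  apply: ae_ge0_le_integralT => [x|||]; first by rewrite lee_fin powR_ge0.
  - apply/measurable_EFinP/(measurableT_comp (measurable_powR _)).
    exact/measurable_funM/measurableT_comp.
  - by move=> x; rewrite lee_fin powR_ge0.
  - apply: filterS fg => x fg; rewrite lee_fin.
    by apply: (ge0_ler_powR (ltW r0)); rewrite ?nnegrE ?mulr_ge0.
have int_ge0 (h : T -> R) : 0 <= \int[mu]_x (`|h x| `^ r)%:E.
  by apply: integral_ge0 => x _; rewrite lee_fin powR_ge0.
apply: (le_trans (gt0_ler_poweR _ _ _ intle)).
- by rewrite invr_ge0 ltW.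
- by rewrite in_itv/= int_ge0 leey.
- rewrite in_itv/= leey andbT; apply: integral_ge0 => x _.
  by rewrite lee_fin powR_ge0.
rewrite intK poweRM ?int_ge0 ?lee_fin ?powR_ge0// poweR_EFin -powRrM.
by rewrite mulfV ?gt_eqF// powRr1.
Qed.

End Lnorm_comparison.

Section Lnorm_pushforward.
Context d1 d2 (X : measurableType d1) (Y : measurableType d2) (R : realType).
Variables (mu : {measure set X -> \bar R}) (nu : {measure set Y -> \bar R}).
Variable phi : X -> Y.
Hypothesis mphi : measurable_fun setT phi.
Hypothesis mu_phi : forall A, measurable A -> mu (phi @^-1` A) = nu A.
Local Open Scope ereal_scope.

Lemma Lnorm_comp_le (p : \bar R) (g : Y -> R) : 0 < p -> measurable_fun setT g ->
  'N[mu]_p[EFin \o (g \o phi)] <= 'N[nu]_p[EFin \o g].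
Proof.
rewrite unlock; case: p => [r _ mg| _ _|//].
- suff -> : \int[mu]_x `|(g (phi x))%:E| `^ r = \int[nu]_y `|(g y)%:E| `^ r by [].
  have mF : measurable_fun setT (fun y => `|(g y)%:E| `^ r).
    exact/measurable_EFinP/(measurableT_comp (measurable_powR _))/measurableT_comp.
  have := @ge0_integral_pushforward _ _ _ _ R phi mphi mu setT _ measurableT mF
    (fun y _ => poweR_ge0 _ _).
  rewrite preimage_setT => <-.
  by apply: eq_measure_integral => A mA _; exact: mu_phi.
- have muT : mu setT = nu setT by rewrite -mu_phi// preimage_setT.
  rewrite muT; case: ifPn => // nu0; apply/ess_supP.
  have [N [mN nuN gN]] := ess_sup_ge nu (abse \o (EFin \o g)).
  exists (phi @^-1` N); split; last by move=> x /= ?; apply: gN.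
  + by rewrite -[X in measurable X]setTI; exact: mphi.
  + by rewrite mu_phi.
Qed.

End Lnorm_pushforward.

Section reflection.
Context {R : realType}.
Local Notation mu := (@lebesgue_measure R).

Lemma measurable_reflect (c : R) :
  measurable_fun [set: measurableTypeR R] (fun x => c - x : measurableTypeR R).
Proof. by apply: measurable_funB => //; exact: measurable_cst. Qed.

Lemma lebesgue_measure_reflect (c : R) (A : set R) : measurable A ->
  mu ((fun x => c - x) @^-1` A) = mu A.
Proof.
move=> mA; rewrite -[LHS]/(pushforward mu ((fun x => c - x) : _ -> measurableTypeR R) A).
apply/esym/lebesgue_measure_unique => //= [|_ _ [[a b] _ <-]].
  exact: measurable_reflect.
rewrite /pushforward.
have -> : (fun x : R => c - x) @^-1` `]a, b]%classic = `[c - b, c - a[%classic.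
  by apply/seteqP; split => x /=; rewrite !in_itv/= => /andP[? ?]; apply/andP; split; lra.
rewrite !lebesgue_measure_itv/= !lte_fin.
have -> : (c - b < c - a) = (a < b) by apply/idP/idP; lra.
by case: ifP => // _; rewrite -!EFinD; congr EFin; lra.
Qed.

Lemma mrestr_reflect (c del : R) (A : set R) : measurable A ->
  mrestr mu (measurable_itv `[c - del, c]%R) ((fun x => c - x) @^-1` A) =
  mrestr mu (measurable_itv `[0, del]%R) A.
Proof.
move=> mA; rewrite /mrestr.
have -> : (fun x => c - x) @^-1` A `&` `[c - del, c] =
    (fun x => c - x) @^-1` (A `&` `[0, del]).
  by apply/seteqP; split => x /= [Ax]; rewrite !in_itv/= => /andP[? ?];
    split => //; apply/andP; split; lra.
exact/lebesgue_measure_reflect/measurableI.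
Qed.

Lemma ae_mrestr_itv (a b : R) (P : R -> Prop) : (forall x, a <= x < b -> P x) ->
  {ae mrestr mu (measurable_itv `[a, b]%R), forall x, P x}.
Proof.
move=> abP.
have mN : measurable (~` `[a, b]%classic `|` [set b]).
  by apply: measurableU => //; exact: measurableC.
exists (~` `[a, b]%classic `|` [set b]); split => //.
- apply/eqP; rewrite eq_le measure_ge0 andbT /mrestr -(lebesgue_measure_set1 b).
  by apply: le_measure; rewrite ?inE//=; [exact: measurableI|move=> x [[nx|->]]].
- move=> x /= /(contra_not (abP x)) x_nlt.
  have [|] := pselect (`[a, b]%classic x); last by left.
  rewrite /= in_itv/= => /andP[ax xb]; right; apply/eqP; rewrite eq_le xb leNgt.
  by apply/negP => xb'; apply: x_nlt; rewrite ax xb'.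
Qed.

Lemma itv_norm_reflect_le (q : \bar R) (c del K : R) (f g : R -> R) :
  (0 < q)%E -> 0 <= K -> measurable_fun `[0, del] f ->
  (forall x, c - del <= x < c -> `|g x| <= K * `|f (c - x)|) ->
  (itv_norm q (c - del) c g <= K%:E * itv_norm q 0 del f)%E.
Proof.
move=> q0 K0 mf gf; rewrite /itv_norm.
pose f0 := f \_ `[0, del].
have mf0 : measurable_fun setT f0 by exact/(measurable_restrictT _ _).1.
pose mu1 := mrestr mu (measurable_itv `[c - del, c]%R).
pose phi := fun x => c - x : measurableTypeR R.
apply: (le_trans (Lnorm_le_scale_ae (mu := mu1) (f := g) (g := f0 \o phi) q0 K0 _ _)).
- exact: measurableT_comp mf0 (measurable_reflect c).
- apply: ae_mrestr_itv => x xI; rewrite /f0 /phi /patch /= ifT; first exact: gf.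
  by rewrite inE/= in_itv/=; apply/andP; split; lra.
apply: lee_wpmul2l; first by rewrite lee_fin.
apply: le_trans (Lnorm_comp_le (measurable_reflect c) (mrestr_reflect c del) q0 mf0) _.
apply: Lnorm_le; first exact: ltW.
by move=> x /=; rewrite lee_fin /f0 /patch; case: ifP; rewrite ?normr0.
Qed.

End reflection.

Section modulus_of_continuity.
Context {R : realType} (w : R -> R).
Hypothesis hw : modulus_type w.

Lemma modulus_le x y : 0 <= x -> x <= y -> y <= 2 * pi -> w x <= w y.
Proof.
case: hw => w_homo _ _ _ x0 xy y2; apply: w_homo => //; rewrite in_itv/=.
- by rewrite x0 (le_trans xy).
- by rewrite y2 (le_trans x0).
Qed.

Lemma modulus_ge0 x : 0 <= x -> x <= 2 * pi -> 0 <= w x.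
Proof. by case: hw => _ _ w0 _ x0 x2; rewrite -w0 modulus_le. Qed.

Lemma modulus_subadd a b : 0 <= a -> 0 <= b -> a + b <= 2 * pi ->
  w (a + b) <= w a + w b.
Proof.
case: hw => _ _ _ w_sub a0 b0 ab2.
have [ab|ba] := leP a b; first exact: w_sub.
by rewrite addrC [w a + _]addrC; apply: w_sub; rewrite 1?addrC// ltW.
Qed.

Lemma modulus_natmul (k : nat) s : 0 <= s -> k%:R * s <= 2 * pi ->
  w (k%:R * s) <= k%:R * w s.
Proof.
move=> s0; elim: k => [|k IHk] ks2; first by rewrite !mul0r; case: hw => _ _ ->.
have k0 : 0 <= k%:R * s by rewrite mulr_ge0.
rewrite -natr1 ![(k%:R + 1) * _]mulrDl !mul1r in ks2 *.
apply: le_trans (modulus_subadd k0 s0 ks2) _; rewrite lerD2r IHk//.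
by apply: le_trans ks2; rewrite lerDl.
Qed.

Lemma modulus_quasi_decreasing s t : 0 < s -> s <= t -> t <= 2 * pi ->
  w t / t <= 2 * (w s / s).
Proof.
move=> s0 st t2; have t0 : 0 < t by exact: lt_le_trans st.
have /andP[kt tk] := truncn_itv (divr_ge0 (ltW t0) (ltW s0)).
set k := Num.truncn (t / s) in kt tk.
rewrite ler_pdivlMr// in kt; rewrite ltr_pdivrMr// in tk.
have ks0 : 0 <= k%:R * s by rewrite mulr_ge0 // ltW.
have wt : w t <= k.+1%:R * w s.
  have t_split : t = k%:R * s + (t - k%:R * s) by rewrite addrC subrK.
  rewrite {1}t_split; apply: le_trans (modulus_subadd _ _ _) _.
  - exact: ks0.
  - by rewrite subr_ge0.
  - by rewrite -t_split.
  rewrite -natr1 mulrDl mul1r; apply: lerD.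
    by apply: modulus_natmul; [exact: ltW|exact: le_trans t2].
  apply: modulus_le; first by rewrite subr_ge0.
    by rewrite lerBlDl -[X in _ + X]mul1r -mulrDl natr1 ltW.
  exact: le_trans st t2.
have kst : k.+1%:R * s <= 2 * t by rewrite -natr1 mulrDl mul1r; lra.
have a0 : 0 <= w s / s.
  apply: divr_ge0 (ltW s0).
  by apply: modulus_ge0; [exact: ltW|exact: le_trans st t2].
have ws : w s = w s / s * s by rewrite divfK ?gt_eqF.
rewrite ler_pdivrMr//; apply: le_trans wt _; rewrite {1}ws; nra.
Qed.

Lemma measurable_modulus_quotient (D : set R) (h : R -> R) (beta : R) :
  measurable D -> (D `<=` `[0, 2 * pi])%classic -> continuous h ->
  measurable_fun D (fun t => w t / (t * h t `^ beta)).
Proof.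
case: hw => _ w_cont _ _ mD D02 h_cont.
have mw : measurable_fun D w.
  apply: (measurable_funS (measurable_itv `[0, 2 * pi]%R)) => //.
  exact: subspace_continuous_measurable_fun (measurable_itv _) w_cont.
(* [x `^ -1] is a measurable stand-in for [x^-1]; they agree on [0, +oo[. *)
pose q := w \* ((@powR R ^~ (-1)) \o (id \* ((@powR R ^~ beta) \o h))).
suff mq : measurable_fun D q.
  apply: eq_measurable_fun mq => t; rewrite in_setE => /D02/=.
  rewrite in_itv/= => /andP[t0 _].
  by rewrite /q /= powR_inv1// mulr_ge0// powR_ge0.
apply: measurable_funM => //; apply: measurableT_comp (measurable_powR _) _.
apply: measurable_funM => //; apply: measurableT_comp (measurable_powR _) _.
exact: measurableT_comp (continuous_measurable_fun h_cont) _.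
Qed.

Lemma modulus_sin_reflect_bound (beta rR c del x : R) (k : nat) : (0 < k)%N ->
  2 * k%:R <= rR -> rR * c = 2 * k%:R * pi -> rR * del <= pi -> c - del <= x < c ->
  `|w x / (x * `|sin (rR * x / 2)| `^ beta)| <=
  2 * `|w (c - x) / ((c - x) * sin (rR * (c - x) / 2) `^ beta)|.
Proof.
move=> k0 kr rc rdel /andP[xdel xc]; set s := c - x.
have pi0 := pi_gt0 R; have k1 : 1 <= k%:R :> R by rewrite ler1n.
have s0 : 0 < s by rewrite subr_gt0.
have sdel : s <= del by rewrite /s; lra.
have r0 : 0 < rR by lra.
have rs : rR * s <= pi by nra.
have rx : pi <= rR * x by nra.
have sx : s <= x by nra.
have xpi : x <= pi by nra.
have sin_s : `|sin (rR * x / 2)| = sin (rR * s / 2).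
  have -> : rR * x / 2 = - (rR * s / 2) + pi *+ k.
    by rewrite -mulr_natl /s; nra.
  rewrite (alternatingn (@sinDpi R)) normrM normrX normrN1 expr1n mul1r sinN normrN.
  by rewrite ger0_norm// sin_ge0_pi//; apply/andP; split; nra.
have P0 : 0 < sin (rR * s / 2) `^ beta.
  by apply: powR_gt0; apply: sin_gt0_pi; apply/andP; split; nra.
have x0 : 0 <= x by lra.
have s0W : 0 <= s by exact: ltW.
have wx0 : 0 <= w x by apply: modulus_ge0; lra.
have ws0 : 0 <= w s by apply: modulus_ge0; lra.
rewrite sin_s !ger0_norm ?divr_ge0 ?mulr_ge0 ?powR_ge0//.
rewrite !invfM !mulrA ler_pM2r ?invr_gt0// -[2 * _ * _]mulrA.
by apply: modulus_quasi_decreasing => //; lra.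
Qed.

End modulus_of_continuity.

Lemma conj_exp_gt0 {R : realType} (p : R) : 1 <= p -> (0 < conj_exp p)%E.
Proof.
by rewrite /conj_exp; case: eqP => // /eqP p1 p_ge1; rewrite lte_fin divr_gt0; lra.
Qed.

Theorem lemma6 (R : realType) (p beta : R) (r : nat) (w : R -> R) :
  1 <= p -> (2 <= r)%N -> modulus_type w ->
  (exists C : R, forall n : nat,
     (itv_norm (conj_exp p) 0 (pi / (r%:R * n.+1%:R))
        (fun t => (w t / (t * sin (r%:R * t / 2) `^ beta)%R))
      <= (C * n.+1%:R `^ (beta + p^-1) * w (pi / n.+1%:R))%:E)%O) ->
  forall m : nat, (m < r./2)%N ->
  exists C' : R, forall n : nat,
     (itv_norm (conj_exp p)
        (2 * m.+1%:R * pi / r%:R - pi / (r%:R * n.+1%:R))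
        (2 * m.+1%:R * pi / r%:R)
        (fun t => (w t / (t * `|sin (r%:R * t / 2)| `^ beta)%R))
      <= (C' * n.+1%:R `^ (beta + p^-1) * w (pi / n.+1%:R))%:E)%O.
Proof.
move=> p1 r2 hw [C hC] m mr; exists (2 * C) => n.
set del := pi / (r%:R * n.+1%:R).
have pi0 := pi_gt0 R.
have r_ge2 : 2 <= r%:R :> R by rewrite (ler_nat R 2).
have n_ge1 : 1 <= n.+1%:R :> R by rewrite (ler_nat R 1).
have rn_ge2 : 2 <= r%:R * n.+1%:R :> R by nra.
have rdel : r%:R * del <= pi.
  have -> : r%:R * del = pi / n.+1%:R by rewrite /del; field; rewrite !gt_eqF//; lra.
  by rewrite ler_pdivrMr; nra.
have mr2 : 2 * m.+1%:R <= r%:R :> R.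
  by rewrite mulrC -natrM muln2 ler_nat -geq_half_double.
rewrite -2![in X in (_ <= X%:E)%E]mulrA [C * _]mulrA EFinM.
apply: le_trans _ (lee_wpmul2l _ (hC n)); last by rewrite lee_fin.
apply: itv_norm_reflect_le; first exact: conj_exp_gt0.
- by [].
- apply: measurable_modulus_quotient => //; last first.
    move=> t; apply: (@continuous_comp _ _ _ (fun t : R => r%:R * t / 2) sin).
      by apply: cvgM; [apply: cvgM|]; [exact: cvg_cst|exact: cvg_id|exact: cvg_cst].
    exact: continuous_sin.
  move=> t /=; rewrite !in_itv/= => /andP[-> t_le] /=.
  by apply: le_trans t_le _; rewrite /del ler_pdivrMr; nra.
- move=> x xI; apply: (@modulus_sin_reflect_bound _ _ hw beta _ _ del _ m.+1) => //.
  by field; lra.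
Qed.
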